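(* For every odd integer $n\ge 7$, $$g_{odd}(\mathrm{Pet}(n,3))=\begin{cases}\frac{n}{3} & \text{if } 3\mid n,\\[2pt] \frac{n+8}{3} & \text{if } n\equiv 1\pmod 3,\\[2pt] \frac{n+10}{3} & \text{if } n\equiv 2\pmod 3.\end{cases}$$
   Context: For integers $n,k$ with $2<2k\le n$, the generalized Petersen graph $\mathrm{Pet}(n,k)$ has vertex set $\{u_0,\dots,u_{n-1}\}\cup\{v_0,\dots,v_{n-1}\}$ and edge set $\{u_iu_{i+1}\}\cup\{u_iv_i\}\cup\{v_iv_{i+k}\}$, indices modulo $n$. $g_{odd}(G)$ denotes the length of a shortest odd cycle of $G$. *)

From mathcomp Require Import all_boot.
Set Implicit Arguments. Unset Strict Implicit. Unset Printing Implicit Defensive.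

(* Vertices of Pet(n,k): (false, i) = u_i, (true, i) = v_i, i : 'I_n. *)
Definition petV (n : nat) : finType := (bool * 'I_n)%type.

Definition pet_adj (n k : nat) : rel (petV n) :=
  fun x y =>
    match x, y with
    | (false, i), (false, j) =>
        (val j == (val i + 1) %% n) || (val i == (val j + 1) %% n)
    | (false, i), (true, j) => val i == val j
    | (true, i), (false, j) => val i == val j
    | (true, i), (true, j) =>
        (val j == (val i + k) %% n) || (val i == (val j + k) %% n)
    end.

Arguments pet_adj n k : clear implicits.

Definition is_graph_cycle (T : finType) (e : rel T) (c : seq T) : Prop :=
  [/\ 3 <= size c, cycle e c & uniq c].

Definition is_odd_girth (T : finType) (e : rel T) (g : nat) : Prop :=
  (exists c, [/\ is_graph_cycle e c, odd (size c) & size c = g]) /\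
  (forall c, is_graph_cycle e c -> odd (size c) -> g <= size c).

From mathcomp Require Import all_boot zify.
Set Implicit Arguments. Unset Strict Implicit. Unset Printing Implicit Defensive.

(* Split the steps of a closed walk in Pet(n,3) into forward/backward rim
   steps (i -> i +- 1), spokes, and forward/backward inner steps (i -> i +- 3).
   A closed walk uses an even number of spokes, so in an odd closed walk the
   number of rim and inner steps is odd; hence its net displacement
   a_0 - a_1 + 3 (a_3 - a_4), which vanishes mod n, is odd, so at least n in
   absolute value.  Without spokes the walk stays on one side and has length
   at least n, or n/3 on the inner side when 3 | n; with spokes its length is
   at least rim + inner + 2 where rim + 3 inner >= n, and parity gives the
   rest.  The bound is attained by v_0 v_3 ... v_(n-3) when 3 | n, and by
   u_0 ... u_r v_r v_(r+3) ... v_(n-3) with r = n mod 3 otherwise. *)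

Lemma eqmod_neq_gap d m n : m = n %[mod d] -> m != n -> n + d <= m \/ m + d <= n.
Proof.
wlog le_nm : m n / n <= m.
  move=> hw mn neq; case: (leqP n m) => le; first exact: hw.
  by rewrite or_comm; apply: hw; rewrite 1?eq_sym // ltnW.
move=> /eqP; rewrite eqn_mod_dvd // => /dvdn_leq; lia.
Qed.

Lemma eqmod_progression d c i j :
  0 < c -> c * i < d -> c * j < d -> c * i = c * j %[mod d] -> i = j.
Proof.
move=> c_gt0 ci cj /eqmod_neq_gap gap.
by apply/eqP; rewrite -(eqn_pmul2l c_gt0); apply/negPn/negP => /gap; lia.
Qed.

Lemma eqn_modM2l c m n d : coprime c d -> (c * m == c * n %[mod d]) = (m == n %[mod d]).
Proof.
move=> cd; wlog le_nm : m n / n <= m.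
  move=> hw; case: (leqP n m) => le; first exact: hw.
  by rewrite eq_sym [RHS]eq_sym hw // ltnW.
by rewrite !eqn_mod_dvd ?leq_mul2l ?le_nm ?orbT // -mulnBr Gauss_dvdr // coprime_sym.
Qed.

Lemma path_iota (r : rel nat) a m :
  (forall j, a <= j < a + m -> r j j.+1) -> path r a (iota a.+1 m).
Proof.
elim: m a => //= m IH a step.
rewrite step ?leqnn ?addnS ?ltnS ?leq_addr // IH // => j /andP[? ?].
apply: step; lia.
Qed.

Lemma last_iota a m : last a (iota a.+1 m) = a + m.
Proof. by elim: m a => [|m IH] a /=; rewrite ?addn0 // IH addnS. Qed.

Lemma cycle_iota (r : rel nat) m :
  (forall j, j < m -> r j j.+1) -> r m 0 -> cycle r (iota 0 m.+1).
Proof.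
by move=> step close; rewrite /= rcons_path last_iota path_iota.
Qed.

Section Walks.
Variable T : Type.
Implicit Types (f : T -> bool) (u w : T -> T -> nat) (x : T) (p : seq T).

Fixpoint walk_sum w x p : nat :=
  if p is y :: q then w x y + walk_sum w y q else 0.

Lemma walk_sumD u w x p :
  walk_sum (fun a b => u a b + w a b) x p = walk_sum u x p + walk_sum w x p.
Proof. by elim: p x => //= y q IH x; rewrite IH addnACA. Qed.

Lemma walk_sumMn c w x p :
  walk_sum (fun a b => c * w a b) x p = c * walk_sum w x p.
Proof. by elim: p x => [|y q IH] x /=; rewrite ?muln0 // IH mulnDr. Qed.

Lemma walk_sum_mod (e : rel T) (h : T -> nat) u w d x p :
  (forall a b, e a b -> h a + u a b = h b + w a b %[mod d]) ->
  path e x p -> h x + walk_sum u x p = h (last x p) + walk_sum w x p %[mod d].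
Proof.
move=> step; elim: p x => //= y q IH x /andP[exy pq].
rewrite addnA -modnDml step // modnDml addnAC -modnDml IH // modnDml.
by rewrite addnAC addnA.
Qed.

Definition side_change f a b : nat := f a != f b.

Lemma odd_side_changes f x p :
  odd (walk_sum (side_change f) x p) = (f x != f (last x p)).
Proof.
elim: p x => [|y q IH] x /=; first by rewrite eqxx.
by rewrite oddD IH /side_change; case: (f x); case: (f y); case: (f _).
Qed.

Lemma walk_sum_one_side f w x p :
  walk_sum (side_change f) x p = 0 -> (forall a b, f a = f x -> w a b = 0) ->
  walk_sum w x p = 0.
Proof.
elim: p x => //= y q IH x; rewrite /side_change => /eqP.
rewrite addn_eq0 eqb0 negbK => /andP[/eqP fxy /eqP q0] w0.
by rewrite w0 // IH // => a b; rewrite -fxy; apply: w0.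
Qed.

End Walks.

Section PetersenWalks.
Variables n k : nat.
Implicit Types (x y : petV n) (p : seq (petV n)).

Definition side_shift (b : bool) : nat := if b then k else 1.

Definition fwd_step (b : bool) x y : nat :=
  [&& x.1 == b, y.1 == b & val y.2 == (val x.2 + side_shift b) %% n].

(* Backward steps are defined as the complement of forward ones, so that the
   five step kinds partition all pairs; on an edge they subtract the shift. *)
Definition bwd_step (b : bool) x y : nat :=
  [&& x.1 == b, y.1 == b & val y.2 != (val x.2 + side_shift b) %% n].

Definition spoke_step : petV n -> petV n -> nat := side_change fst.

Lemma step_partition x y :
  fwd_step false x y + bwd_step false x y + spoke_step x y
    + fwd_step true x y + bwd_step true x y = 1.
Proof.
case: x y => [[] i] [[] j]; rewrite /fwd_step /bwd_step /spoke_step /side_change /=;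
  by case: (val j == _).
Qed.

Lemma step_displacement x y : pet_adj n k x y ->
  val x.2 + (fwd_step false x y + k * fwd_step true x y)
    = val y.2 + (bwd_step false x y + k * bwd_step true x y) %[mod n].
Proof.
case: x y => [[] i] [[] j]; rewrite /fwd_step /bwd_step /= ?muln0 ?addn0 ?add0n;
  try by move=> /eqP->.
all: case: (@eqP _ (val j)) => [->|_] /= => [_|/eqP->];
  by rewrite ?muln1 ?muln0 ?addn0 ?modn_mod.
Qed.

Lemma size_walk x p :
  size p = walk_sum (fwd_step false) x p + walk_sum (bwd_step false) x p
    + walk_sum spoke_step x p + walk_sum (fwd_step true) x p
    + walk_sum (bwd_step true) x p.
Proof. by elim: p x => //= y q IH x; rewrite (IH y); have := step_partition x y; lia. Qed.

Lemma walk_displacement x p : path (pet_adj n k) x p ->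
  val x.2 + (walk_sum (fwd_step false) x p + k * walk_sum (fwd_step true) x p)
    = val (last x p).2
      + (walk_sum (bwd_step false) x p + k * walk_sum (bwd_step true) x p) %[mod n].
Proof.
move/(walk_sum_mod (h := fun v => val v.2) step_displacement).
by rewrite !walk_sumD !walk_sumMn.
Qed.

Lemma spokeless_walk x p : walk_sum spoke_step x p = 0 ->
  walk_sum (fwd_step false) x p + walk_sum (bwd_step false) x p = 0 \/
  walk_sum (fwd_step true) x p + walk_sum (bwd_step true) x p = 0.
Proof.
move=> no_spoke.
have off_side b : b != x.1 ->
    walk_sum (fun a c => fwd_step b a c + bwd_step b a c) x p = 0.
  move=> bx; apply: walk_sum_one_side no_spoke _ => a c ax.
  by rewrite /fwd_step /bwd_step ax eq_sym (negbTE bx).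
by case: x.1 off_side => off_side; [left|right]; rewrite -walk_sumD off_side.
Qed.

End PetersenWalks.

Definition pet3_odd_girth (n : nat) : nat :=
  if n %% 3 == 0 then n %/ 3
  else if n %% 3 == 1 then (n + 8) %/ 3
  else (n + 10) %/ 3.

Lemma pet3_odd_girth_le_n n : odd n -> 3 <= n -> pet3_odd_girth n <= n.
Proof. by rewrite /pet3_odd_girth; case: ifP; [|case: ifP]; lia. Qed.

Lemma pet3_odd_girth_le_third n m : 3 %| n -> n <= 3 * m -> pet3_odd_girth n <= m.
Proof. by rewrite /pet3_odd_girth; case: ifP; lia. Qed.

Lemma pet3_odd_girth_le_spoked n rim inner s : odd n -> n <= rim + 3 * inner ->
  0 < s -> ~~ odd s -> odd (rim + inner + s) -> pet3_odd_girth n <= rim + inner + s.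
Proof. by rewrite /pet3_odd_girth; case: ifP; [|case: ifP]; lia. Qed.

Lemma pet3_odd_girth_le_counts n rf rb s jf jb : odd n -> 3 <= n ->
  rf + 3 * jf = rb + 3 * jb %[mod n] -> ~~ odd s ->
  (s = 0 -> rf + rb = 0 \/ jf + jb = 0) -> odd (rf + rb + s + jf + jb) ->
  pet3_odd_girth n <= rf + rb + s + jf + jb.
Proof.
move=> odd_n n_ge3 disp even_s one_side odd_len.
have far : n <= rf + rb + 3 * (jf + jb).
  have neq : rf + 3 * jf != rb + 3 * jb.
    by apply/eqP => same; move: even_s odd_len; lia.
  by case: (eqmod_neq_gap disp neq); lia.
have [s0|s_gt0] := posnP s.
  have le_n := pet3_odd_girth_le_n odd_n n_ge3.
  have [rim0|] := one_side s0; last lia.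
  have [dvd3|ndvd3] := boolP (3 %| n).
    by have := @pet3_odd_girth_le_third n (jf + jb) dvd3; lia.
  have inner_congr : jf = jb %[mod n].
    apply/eqP; rewrite -(@eqn_modM2l 3) ?prime_coprime //.
    move: disp; have [-> ->] : rf = 0 /\ rb = 0 by lia.
    by move/eqP.
  have neq : jf != jb by apply/eqP => same; move: odd_len; lia.
  by case: (eqmod_neq_gap inner_congr neq); lia.
by apply: leq_trans (pet3_odd_girth_le_spoked odd_n far s_gt0 even_s _) _; lia.
Qed.

Lemma pet3_odd_closed_walk n x p : odd n -> 3 <= n ->
  path (pet_adj n 3) x p -> last x p = x -> odd (size p) -> pet3_odd_girth n <= size p.
Proof.
move=> odd_n n_ge3 walk closed; rewrite (size_walk 3 x) => odd_len.
apply: pet3_odd_girth_le_counts odd_len => //.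
- by move/eqP: (walk_displacement walk); rewrite closed eqn_modDl => /eqP.
- by rewrite /spoke_step odd_side_changes closed eqxx.
- exact: spokeless_walk.
Qed.

Section Witnesses.
Variables (n' k : nat).
Local Notation n := n'.+1.
Local Notation e := (pet_adj n k).

Lemma pet_adj_sym : symmetric e.
Proof. by case=> [[] i] [[] j] /=; rewrite 1?orbC // eq_sym. Qed.

Definition pet_vertex (b : bool) (i : nat) : petV n := (b, inord (i %% n)).

Lemma pet_vertex_mod b i j : i = j %[mod n] -> pet_vertex b i = pet_vertex b j.
Proof. by rewrite /pet_vertex => ->. Qed.

Lemma pet_vertex_inj b c i j :
  pet_vertex b i = pet_vertex c j -> b = c /\ i = j %[mod n].
Proof. by move=> [-> /(congr1 val)]; rewrite /= !inordK ?ltn_pmod. Qed.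

Lemma pet_adj_rim i : e (pet_vertex false i) (pet_vertex false i.+1).
Proof. by rewrite /= !inordK ?ltn_pmod // modnDml addn1 eqxx. Qed.

Lemma pet_adj_inner i : e (pet_vertex true i) (pet_vertex true (i + k)).
Proof. by rewrite /= !inordK ?ltn_pmod // modnDml eqxx. Qed.

Lemma pet_adj_spoke i : e (pet_vertex false i) (pet_vertex true i).
Proof. by rewrite /= !inordK ?ltn_pmod. Qed.

Lemma inner_cycle q : n = k * q -> 3 <= q ->
  is_graph_cycle e [seq pet_vertex true (k * j) | j <- iota 0 q].
Proof.
move=> nkq q_ge3; have k_gt0 : 0 < k by move: nkq; case: k.
split; first by rewrite size_map size_iota.
- case: q nkq q_ge3 => // q nkq _; rewrite cycle_map.
  apply: cycle_iota => [j _|].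
    by have := pet_adj_inner (k * j); rewrite -mulnSr.
  have := pet_adj_inner (k * q).
  by rewrite (@pet_vertex_mod _ (k * q + k) (k * 0)) // muln0 -mulnSr -nkq modnn.
- rewrite map_inj_in_uniq ?iota_uniq // => i j; rewrite !mem_iota !add0n => iq jq.
  case/pet_vertex_inj=> _; apply: eqmod_progression; rewrite // nkq ltn_pmul2l //.
Qed.

(* u_0, ..., u_r, v_r, v_(r+k), ..., v_(r+kq); the last one is v_n = v_0. *)
Definition rim_inner_vertex r j : petV n :=
  if j <= r then pet_vertex false j else pet_vertex true (r + k * (j - r.+1)).

Lemma rim_inner_cycle r q : n = r + k * q -> 0 < r < n ->
  is_graph_cycle e [seq rim_inner_vertex r j | j <- iota 0 (r + q).+2].
Proof.
move=> nrkq /andP[r_gt0 r_lt_n].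
have k_gt0 : 0 < k by move: nrkq r_lt_n; case: k; lia.
have step j : j <= r + q -> e (rim_inner_vertex r j) (rim_inner_vertex r j.+1).
  rewrite /rim_inner_vertex; case: (ltngtP j r) => [jr|rj|->] _.
  - exact: pet_adj_rim.
  - rewrite subSn // mulnSr addnA; exact: pet_adj_inner.
  - rewrite subnn muln0 addn0; exact: pet_adj_spoke.
have close : e (rim_inner_vertex r (r + q).+1) (rim_inner_vertex r 0).
  rewrite /rim_inner_vertex leq0n; have -> : ((r + q).+1 <= r) = false by lia.
  rewrite subSS addKn -nrkq pet_adj_sym.
  by rewrite (@pet_vertex_mod _ n 0) ?modnn ?pet_adj_spoke.
split; first by rewrite size_map size_iota; lia.
- by rewrite cycle_map; apply: cycle_iota.
- rewrite map_inj_in_uniq ?iota_uniq // => i j; rewrite !mem_iota !add0n => iq jq.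
  have inner_lt l : l < (r + q).+2 -> k * (l - r.+1) < n.
    move=> lq; apply: leq_ltn_trans (leq_mul (leqnn k) (_ : l - r.+1 <= q)) _; lia.
  rewrite /rim_inner_vertex; case: leqP => ir; case: leqP => jr;
    case/pet_vertex_inj => // _.
  + by move=> ij; apply: (@eqmod_progression n 1); rewrite ?mul1n //; lia.
  + move=> /eqP; rewrite eqn_modDl => /eqP ij.
    by have := eqmod_progression k_gt0 (inner_lt _ iq) (inner_lt _ jq) ij; lia.
Qed.
End Witnesses.

Theorem mainTheorem20 (n : nat) :
  odd n -> 7 <= n ->
  is_odd_girth (pet_adj n 3)
    (if n %% 3 == 0 then n %/ 3
     else if n %% 3 == 1 then (n + 8) %/ 3
     else (n + 10) %/ 3).
Proof.
move=> odd_n n_ge7; change (is_odd_girth (pet_adj n 3) (pet3_odd_girth n)).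
split; last first.
  case=> [//|x p] [_ walk _]; rewrite -[size _](size_rcons p x) => odd_len.
  by apply: pet3_odd_closed_walk walk (last_rcons _ _ _) odd_len; lia.
case: n odd_n n_ge7 => // n' odd_n n_ge7.
have [r0|r_gt0] := posnP (n'.+1 %% 3).
  exists [seq pet_vertex n' true (3 * j) | j <- iota 0 (n'.+1 %/ 3)].
  rewrite size_map size_iota /pet3_odd_girth r0; split=> //; last lia.
  by apply: inner_cycle; lia.
exists [seq rim_inner_vertex n' 3 (n'.+1 %% 3) j
          | j <- iota 0 (n'.+1 %% 3 + n'.+1 %/ 3).+2].
rewrite size_map size_iota /pet3_odd_girth; split.
- by apply: rim_inner_cycle; lia.
- lia.
- by case: ifP; [|case: ifP]; lia.
Qed.
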